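(* Let $M$ be a monoid with identity $1$ (not necessarily finite). (i) If $M$ is a group, then $\sigma_m(M)=\sigma_m^*(M)=\sigma_s(M)$. (ii) If $S=M-\{1\}$ is nonempty and is a subsemigroup of $M$, then $\sigma_m^*(M)\le\sigma_m(M)=\sigma_s(S)$ and $\sigma_s(M)=2$. (iii) If $M$ is not a group and $M-\{1\}$ is not a nonempty subsemigroup of $M$, then $\sigma_m(M)=\sigma_m^*(M)=\sigma_s(M)=2$.
   Context: A subsemigroup is a nonempty subset closed under the operation. For a monoid $M$: a submonoid is a subsemigroup containing the identity of $M$; a monoidal subsemigroup is a subsemigroup that is a monoid in its own right (its identity need not be that of $M$). $\sigma_s(M)$, $\sigma_m(M)$, $\sigma_m^*(M)$ denote the least positive integer $n$ such that $M$ is the union of $n$ proper subsemigroups, proper submonoids, respectively proper monoidal subsemigroups; each is $\infty$ if no such finite $n$ exists. For a semigroup $S$, $\sigma_s(S)$ is defined analogously with proper subsemigroups. *)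

Set Implicit Arguments.
(* A (possibly infinite) monoid is given by a carrier T, an operation mul and
   an identity one; subsets are predicates T -> Prop.
   Covering numbers are encoded as a relation with values in option nat,
   where None stands for infinity. *)

Section Defs.
Variables (T : Type) (mul : T -> T -> T) (one : T).

Definition is_monoid : Prop :=
  (forall x y z, mul x (mul y z) = mul (mul x y) z) /\
  (forall x, mul one x = x) /\ (forall x, mul x one = x).

Definition is_group : Prop :=
  forall x, exists y, mul x y = one /\ mul y x = one.

Definition fullset : T -> Prop := fun _ => True.

Definition subsemigroup_in (U A : T -> Prop) : Prop :=
  (forall x, A x -> U x) /\ (exists x, A x) /\
  (forall x y, A x -> A y -> A (mul x y)).

Definition submonoid (A : T -> Prop) : Prop :=
  subsemigroup_in fullset A /\ A one.

Definition monoidal_subsemigroup (A : T -> Prop) : Prop :=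
  subsemigroup_in fullset A /\
  exists e, A e /\ forall x, A x -> mul e x = x /\ mul x e = x.

Definition proper_in (U A : T -> Prop) : Prop := exists x, U x /\ ~ A x.

Definition coverable (U : T -> Prop) (P : (T -> Prop) -> Prop) (n : nat) : Prop :=
  exists A : nat -> T -> Prop,
    (forall i, i < n -> P (A i) /\ proper_in U (A i)) /\
    (forall x, U x -> exists i, i < n /\ A i x).

Definition is_cover_number (U : T -> Prop) (P : (T -> Prop) -> Prop)
    (k : option nat) : Prop :=
  match k with
  | Some n => 0 < n /\ coverable U P n /\
              (forall m, 0 < m -> m < n -> ~ coverable U P m)
  | None => forall n, 0 < n -> ~ coverable U P n
  end.

Definition sigma_s_is (k : option nat) : Prop :=
  is_cover_number fullset (subsemigroup_in fullset) k.
Definition sigma_m_is (k : option nat) : Prop :=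
  is_cover_number fullset submonoid k.
Definition sigma_mstar_is (k : option nat) : Prop :=
  is_cover_number fullset monoidal_subsemigroup k.
Definition sigma_s_sub_is (S : T -> Prop) (k : option nat) : Prop :=
  is_cover_number S (subsemigroup_in S) k.

End Defs.

Definition le_ext (a b : option nat) : Prop :=
  match a, b with
  | _, None => True
  | None, Some _ => False
  | Some m, Some n => m <= n
  end.

From Stdlib Require Import Classical ClassicalEpsilon Lia.
Set Implicit Arguments.
Unset Strict Implicit.

(* Every submonoid is a monoidal subsemigroup and every monoidal subsemigroup
   is a subsemigroup, so a cover of M by two proper submonoids makes all three
   covering numbers 2.  Adjoining 1 turns a subsemigroup into a submonoid; in
   a group this keeps proper subsemigroups proper, since a subsemigroup
   containing every x <> 1 contains x x^-1 = 1.  When M - {1} is a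
   subsemigroup, adjoining 1 and intersecting with M - {1} translate covers of
   M by proper submonoids into covers of M - {1} by proper subsemigroups and
   back.  Otherwise, if M is not a group, some element has no right inverse
   (a monoid in which every element has a right inverse is a group) while some
   a <> 1 has one; the right-invertible elements and the remaining ones
   together with 1 are then two proper submonoids covering M. *)

Section CoverNumbers.
Variable T : Type.

Lemma coverable_mono (U : T -> Prop) (P Q : (T -> Prop) -> Prop) n :
  (forall A, P A -> Q A) -> coverable U P n -> coverable U Q n.
Proof.
  intros PQ [A [HA cover]]. exists A; split; [|exact cover].
  intros i Hi; destruct (HA i Hi); split; auto.
Qed.

Lemma is_cover_number_iff (U U' : T -> Prop) (P P' : (T -> Prop) -> Prop) :
  (forall n, coverable U P n <-> coverable U' P' n) ->
  forall k, is_cover_number U P k <-> is_cover_number U' P' k.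
Proof.
  intros equiv [n|]; simpl.
  - split; intros [n_gt0 [Cn minimal]]; repeat split; try apply equiv; auto;
      intros m m_gt0 lt_mn Cm; apply (minimal m m_gt0 lt_mn), equiv; exact Cm.
  - split; intros never n n_gt0 Cn; apply (never n n_gt0), equiv; exact Cn.
Qed.

Lemma is_cover_number_antitone (U : T -> Prop) (P Q : (T -> Prop) -> Prop) a b :
  (forall A, P A -> Q A) ->
  is_cover_number U Q a -> is_cover_number U P b -> le_ext a b.
Proof.
  intros PQ Ha Hb. destruct b as [n|]; [|destruct a; exact I].
  destruct Hb as [n_gt0 [Cn _]].
  assert (CQn : coverable U Q n) by exact (coverable_mono PQ Cn).
  destruct a as [m|]; simpl in Ha |- *.
  - destruct Ha as [_ [_ minimal]].
    destruct (Compare_dec.le_lt_dec m n) as [le_mn|lt_nm]; [exact le_mn|].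
    exfalso; exact (minimal n n_gt0 lt_nm CQn).
  - exact (Ha n n_gt0 CQn).
Qed.

Lemma not_coverable_full_1 (P : (T -> Prop) -> Prop) :
  ~ coverable (@fullset T) P 1.
Proof.
  intros [A [HA cover]]. destruct (HA 0 ltac:(lia)) as [_ [x [_ notAx]]].
  destruct (cover x I) as [i [Hi Aix]].
  replace i with 0 in Aix by lia. exact (notAx Aix).
Qed.

Lemma is_cover_number_2 (P : (T -> Prop) -> Prop) :
  coverable (@fullset T) P 2 -> is_cover_number (@fullset T) P (Some 2).
Proof.
  intros C2; simpl; repeat split; auto.
  intros m m_gt0 lt_m2. replace m with 1 by lia. apply not_coverable_full_1.
Qed.

Lemma coverable_full_2 (P : (T -> Prop) -> Prop) (A B : T -> Prop) :
  P A -> P B -> (exists x, ~ A x) -> (exists x, ~ B x) ->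
  (forall x, A x \/ B x) -> coverable (@fullset T) P 2.
Proof.
  intros PA PB [a notAa] [b notBb] cover.
  exists (fun i => match i with 0 => A | _ => B end). split.
  - intros [|[|i]] Hi; [| |lia]; (split; [auto|eexists; split; [exact I|eauto]]).
  - intros x _. destruct (cover x); [exists 0|exists 1]; split; auto.
Qed.

End CoverNumbers.

Section Monoid.
Variables (T : Type) (mul : T -> T -> T) (one : T).
Hypothesis mulA : forall x y z, mul x (mul y z) = mul (mul x y) z.
Hypothesis mul1x : forall x, mul one x = x.
Hypothesis mulx1 : forall x, mul x one = x.

Local Notation nonidentity := (fun x : T => x <> one).

Lemma submonoid_monoidal (A : T -> Prop) :
  submonoid mul one A -> monoidal_subsemigroup mul A.
Proof. intros [HA A1]. split; [exact HA|]. exists one; split; auto. Qed.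

Lemma monoidal_subsemigroup_subsemigroup (A : T -> Prop) :
  monoidal_subsemigroup mul A -> subsemigroup_in mul (@fullset T) A.
Proof. intros [HA _]; exact HA. Qed.

Lemma submonoid_subsemigroup (A : T -> Prop) :
  submonoid mul one A -> subsemigroup_in mul (@fullset T) A.
Proof. intros [HA _]; exact HA. Qed.

Lemma submonoid_adjoin_one (U A : T -> Prop) :
  subsemigroup_in mul U A -> submonoid mul one (fun x => A x \/ x = one).
Proof.
  intros [_ [_ closed]]. split; [|now right].
  split; [intros; exact I|]. split; [exists one; now right|].
  intros x y [Ax| ->] [Ay| ->]; rewrite ?mul1x, ?mulx1; auto.
Qed.

Lemma group_subsemigroup_one (A : T -> Prop) :
  is_group mul one -> subsemigroup_in mul (@fullset T) A ->
  (forall x, x <> one -> A x) -> A one.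
Proof.
  intros G [_ [[y Ay] closed]] nonid_A.
  destruct (classic (exists z, z <> one)) as [[z z_neq1]|trivial].
  - destruct (G z) as [z' [zz' _]].
    assert (z'_neq1 : z' <> one) by (intros ->; rewrite mulx1 in zz'; auto).
    rewrite <- zz'. apply closed; auto.
  - replace one with y; [exact Ay|].
    apply NNPP; intro y_neq1; apply trivial; exists y; auto.
Qed.

Lemma group_coverable_submonoid n :
  is_group mul one ->
  coverable (@fullset T) (subsemigroup_in mul (@fullset T)) n ->
  coverable (@fullset T) (submonoid mul one) n.
Proof.
  intros G [A [HA cover]]. exists (fun i x => A i x \/ x = one). split.
  - intros i Hi. destruct (HA i Hi) as [Ai_sub [w [_ notAw]]].
    split; [exact (submonoid_adjoin_one Ai_sub)|].
    apply NNPP; intro full; apply notAw.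
    assert (nonid_A : forall x, x <> one -> A i x).
    { intros x x_neq1. apply NNPP; intro notAx; apply full.
      exists x; split; [exact I|]. intros [Ax|x_eq1]; auto. }
    destruct (classic (w = one)) as [ ->|w_neq1]; auto.
    exact (group_subsemigroup_one G Ai_sub nonid_A).
  - intros x _. destruct (cover x I) as [i [Hi Ax]]; exists i; auto.
Qed.

Section NonidentitySubsemigroup.
Hypothesis nonidentity_closed :
  forall x y, x <> one -> y <> one -> mul x y <> one.

Lemma submonoid_trace_nonidentity (A : T -> Prop) :
  submonoid mul one A -> proper_in (@fullset T) A ->
  (exists y, A y /\ y <> one) ->
  subsemigroup_in mul nonidentity (fun x => A x /\ x <> one) /\
  proper_in nonidentity (fun x => A x /\ x <> one).
Proof.
  intros [[_ [_ closed]] A1] [w [_ notAw]] [y Ay].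
  split; [split; [|split]|].
  - intros x [_ x_neq1]; exact x_neq1.
  - exists y; exact Ay.
  - intros u v [Au u_neq1] [Av v_neq1]; split; auto.
  - exists w; split; [intros ->; auto|]. intros [Aw _]; auto.
Qed.

Lemma coverable_submonoid_trace n (x0 : T) : x0 <> one ->
  coverable (@fullset T) (submonoid mul one) n ->
  coverable nonidentity (subsemigroup_in mul nonidentity) n.
Proof.
  intros x0_neq1 [A [HA cover]]. destruct (cover x0 I) as [j [Hj Ajx0]].
  (* members of the cover missing M - {1} are replaced by the one through x0 *)
  pose (meets i := exists y, A i y /\ y <> one).
  exists (fun i x => (if excluded_middle_informative (meets i)
                     then A i x else A j x) /\ x <> one).
  split.
  - intros i Hi.
    destruct (excluded_middle_informative (meets i)) as [meets_i|_].
    + destruct (HA i Hi) as [HAi proper_i].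
      exact (submonoid_trace_nonidentity HAi proper_i meets_i).
    + destruct (HA j Hj) as [HAj proper_j].
      exact (submonoid_trace_nonidentity HAj proper_j (ex_intro _ x0 (conj Ajx0 x0_neq1))).
  - intros x x_neq1. destruct (cover x I) as [i [Hi Aix]]. exists i; split; auto.
    destruct (excluded_middle_informative (meets i)) as [_|not_meets]; auto.
    exfalso; apply not_meets; exists x; auto.
Qed.

Lemma coverable_subsemigroup_2 (x0 : T) : x0 <> one ->
  coverable (@fullset T) (subsemigroup_in mul (@fullset T)) 2.
Proof.
  intros x0_neq1. apply (coverable_full_2 (A := nonidentity) (B := fun x => x = one)).
  - split; [intros; exact I|]. split; [exists x0; exact x0_neq1|exact nonidentity_closed].
  - split; [intros; exact I|]. split; [exists one; reflexivity|].
    intros x y -> ->; apply mul1x.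
  - exists one; auto.
  - exists x0; exact x0_neq1.
  - intros x. destruct (classic (x = one)); auto.
Qed.

End NonidentitySubsemigroup.

Lemma coverable_submonoid_adjoin_one n (x0 : T) : x0 <> one ->
  coverable nonidentity (subsemigroup_in mul nonidentity) n ->
  coverable (@fullset T) (submonoid mul one) n.
Proof.
  intros x0_neq1 [B [HB cover]]. exists (fun i x => B i x \/ x = one). split.
  - intros i Hi. destruct (HB i Hi) as [HBi [w [w_neq1 notBw]]].
    split; [exact (submonoid_adjoin_one HBi)|].
    exists w; split; [exact I|]. intros [Bw|w_eq1]; auto.
  - intros x _. destruct (classic (x = one)) as [x_eq1|x_neq1].
    + destruct (cover x0 x0_neq1) as [j [Hj _]]. exists j; auto.
    + destruct (cover x x_neq1) as [i [Hi Bix]]. exists i; auto.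
Qed.

Definition right_invertible (x : T) : Prop := exists y, mul x y = one.

Lemma group_of_right_invertible :
  (forall x, right_invertible x) -> is_group mul one.
Proof.
  intros inv x. destruct (inv x) as [y xy]. destruct (inv y) as [z yz].
  (* x = x (y z) = (x y) z = z *)
  assert (x_eq_z : x = z) by (rewrite <- (mulx1 x), <- yz, mulA, xy, mul1x; reflexivity).
  exists y; split; [exact xy|]. rewrite x_eq_z; exact yz.
Qed.

Lemma submonoid_right_invertible : submonoid mul one right_invertible.
Proof.
  split; [|exists one; apply mul1x].
  split; [intros; exact I|]. split; [exists one; exists one; apply mul1x|].
  intros x y [x' xx'] [y' yy']. exists (mul y' x').
  rewrite <- mulA, (mulA y y' x'), yy', mul1x; exact xx'.
Qed.

Lemma submonoid_not_right_invertible :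
  submonoid mul one (fun x => ~ right_invertible x \/ x = one).
Proof.
  split; [|now right].
  split; [intros; exact I|]. split; [exists one; now right|].
  intros x y [not_inv_x| ->] [not_inv_y| ->]; rewrite ?mul1x, ?mulx1; auto.
  left. intros [z xyz]. apply not_inv_x. exists (mul y z). rewrite mulA; exact xyz.
Qed.

Lemma exists_nonidentity_right_invertible :
  ~ is_group mul one ->
  ~ ((exists x, x <> one) /\ subsemigroup_in mul (@fullset T) nonidentity) ->
  exists a, a <> one /\ right_invertible a.
Proof.
  intros not_group not_nonid_sub.
  assert (nontrivial : exists x, x <> one).
  { apply NNPP; intro trivial; apply not_group. intro x. exists x.
    replace x with one by (apply NNPP; intro h; apply trivial; exists x; auto).
    rewrite mul1x; auto. }
  apply NNPP; intro none; apply not_nonid_sub.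
  split; [exact nontrivial|]. split; [intros; exact I|]. split; [exact nontrivial|].
  intros x y x_neq1 y_neq1 xy_eq1. apply none. exists x; split; [|exists y]; auto.
Qed.

Lemma coverable_submonoid_2 :
  ~ is_group mul one ->
  ~ ((exists x, x <> one) /\ subsemigroup_in mul (@fullset T) nonidentity) ->
  coverable (@fullset T) (submonoid mul one) 2.
Proof.
  intros not_group not_nonid_sub.
  destruct (exists_nonidentity_right_invertible not_group not_nonid_sub)
    as [a [a_neq1 inv_a]].
  assert (not_inv : exists x0, ~ right_invertible x0).
  { apply NNPP; intro all_inv; apply not_group, group_of_right_invertible.
    intro x; apply NNPP; intro h; apply all_inv; exists x; exact h. }
  apply (coverable_full_2 submonoid_right_invertible submonoid_not_right_invertible).
  - exact not_inv.
  - exists a. intros [not_inv_a|a_eq1]; auto.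
  - intro x. destruct (classic (right_invertible x)); auto.
Qed.

End Monoid.

Theorem mainTheorem4 (T : Type) (mul : T -> T -> T) (one : T)
  (HM : is_monoid mul one) :
  let S := fun x : T => x <> one in
  (* (i) *)
  (is_group mul one ->
     forall k, (sigma_m_is mul one k <-> sigma_mstar_is mul k) /\
               (sigma_m_is mul one k <-> sigma_s_is mul k)) /\
  (* (ii) *)
  ((exists x, S x) -> subsemigroup_in mul (@fullset T) S ->
     (forall a b, sigma_mstar_is mul a -> sigma_m_is mul one b -> le_ext a b) /\
     (forall k, sigma_m_is mul one k <-> sigma_s_sub_is mul S k) /\
     sigma_s_is mul (Some 2)) /\
  (* (iii) *)
  (~ is_group mul one ->
   ~ ((exists x, S x) /\ subsemigroup_in mul (@fullset T) S) ->
     sigma_m_is mul one (Some 2) /\ sigma_mstar_is mul (Some 2) /\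
     sigma_s_is mul (Some 2)).
Proof.
  destruct HM as [mulA [mul1x mulx1]]. intros S.
  pose proof (submonoid_monoidal mul1x mulx1) as m_ms.
  pose proof (@monoidal_subsemigroup_subsemigroup T mul) as ms_s.
  pose proof (@submonoid_subsemigroup T mul one) as m_s.
  split; [|split].
  - intros G k; split; apply is_cover_number_iff; intro n; split; intro C.
    + exact (coverable_mono m_ms C).
    + exact (group_coverable_submonoid mul1x mulx1 G (coverable_mono ms_s C)).
    + exact (coverable_mono m_s C).
    + exact (group_coverable_submonoid mul1x mulx1 G C).
  - intros [x0 x0_neq1] [_ [_ closed]]. split; [|split].
    + intros a b; exact (is_cover_number_antitone m_ms).
    + apply is_cover_number_iff; intro n; split.
      * exact (coverable_submonoid_trace closed x0_neq1).
      * exact (coverable_submonoid_adjoin_one mul1x mulx1 x0_neq1).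
    + exact (is_cover_number_2 (coverable_subsemigroup_2 mul1x closed x0_neq1)).
  - intros not_group not_nonid_sub.
    pose proof (coverable_submonoid_2 mulA mul1x mulx1 not_group not_nonid_sub) as C2.
    split; [|split]; apply is_cover_number_2.
    + exact C2.
    + exact (coverable_mono m_ms C2).
    + exact (coverable_mono m_s C2).
Qed.
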